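(* In the distributional optimal poisoning problem below, assume the loss is convex in the model parameters and the relevant loss minimizers exist and are unique. Suppose either (1) $\mathrm{supp}(\mu_c)\subseteq\mathcal{C}$; or (2) $\mathcal{H}=\{h_\theta\}$ is a convex hypothesis class and for every $h_\theta\in\mathcal{H}$ there exists a distribution $\mu$ with $\mathrm{supp}(\mu)\subseteq\mathcal{C}$ and $\frac{\partial}{\partial\theta}L(h_\theta;\mu)=0$. Then the optimal attack performance is achieved with poisoning ratio $\epsilon$: if $(\mu_p^*,\delta^* )$ is a distributional optimal poisoning pair, there exists a distribution $\mu_p^{(\epsilon)}$ with $\mathrm{supp}(\mu_p^{(\epsilon)})\subseteq\mathcal{C}$ such that $$\mathrm{Risk}\Big(\arg\min_{h\in\mathcal{H}}\{L(h;\mu_c)+\epsilon L(h;\mu_p^{(\epsilon)})\};\mu_c\Big)=\mathrm{Risk}\Big(\arg\min_{h\in\mathcal{H}}\{L(h;\mu_c)+\delta^* L(h;\mu_p^* )\};\mu_c\Big).$$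
   Context: $\mathcal{X}\subseteq\mathbb{R}^n$, $\mathcal{Y}=\{-1,+1\}$, $\mu_c$ the clean distribution on $\mathcal{X}\times\mathcal{Y}$, $\ell\ge 0$ the surrogate loss, $\mathrm{Risk}(h;\mu)=\Pr_{(x,y)\sim\mu}[h(x)\ne y]$, $L(h;\mu)=\mathbb{E}_{(x,y)\sim\mu}[\ell(h;x,y)]$, $\epsilon\ge0$ the poisoning budget, $\mathcal{C}\subseteq\mathcal{X}\times\mathcal{Y}$ the constraint set. Distributional optimal poisoning: $(\mu_p^*,\delta^* )\in\arg\max_{(\mu_p,\delta)}\mathrm{Risk}(h_p;\mu_c)$ subject to $\mathrm{supp}(\mu_p)\subseteq\mathcal{C}$ and $0\le\delta\le\epsilon$, where $h_p=\arg\min_{h\in\mathcal{H}}\{L(h;\mu_c)+\delta L(h;\mu_p)\}$. *)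

From mathcomp Require Import all_boot all_order all_algebra all_classical all_reals all_analysis.
Import numFieldNormedType.Exports.
Set Implicit Arguments. Unset Strict Implicit. Unset Printing Implicit Defensive.
Import Order.TTheory GRing.Theory Num.Theory.
Local Open Scope classical_set_scope.
Local Open Scope ring_scope.

(* Data space X x Y with X an arbitrary measurable space and Y = {-1,+1}
   encoded as bool (true = +1, false = -1).  Hypotheses are h_theta,
   indexed by parameters theta in a normed space V over R. *)
Section Poisoning.
Variables (R : realType) (d : measure_display) (X : measurableType d)
  (V : normedModType R).

Definition sample := (X * bool)%type.

Definition supported_in (mu : probability sample R) (C : set sample) : Prop :=
  mu.-negligible (~` C).

Definition Risk (h : V -> X -> bool) (theta : V) (mu : probability sample R)
  : \bar R := mu [set z : sample | h theta z.1 != z.2].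

Definition Lloss (loss : V -> sample -> R) (theta : V)
  (mu : probability sample R) : \bar R :=
  (\int[mu]_z (loss theta z)%:E)%E.

Definition pobj (loss : V -> sample -> R) (muc mup : probability sample R)
  (delta : R) (theta : V) : \bar R :=
  (Lloss loss theta muc + delta%:E * Lloss loss theta mup)%E.

Definition is_argmin (Theta : set V) (F : V -> \bar R) (theta : V) : Prop :=
  Theta theta /\ forall t, Theta t -> (F theta <= F t)%E.

Definition convex_param_set (Theta : set V) : Prop :=
  forall a b (t : R), Theta a -> Theta b -> 0 <= t <= 1 ->
    Theta (t *: a + (1 - t) *: b).

Definition loss_convex (loss : V -> sample -> R) : Prop :=
  forall z a b (t : R), 0 <= t <= 1 ->
    loss (t *: a + (1 - t) *: b) z <= t * loss a z + (1 - t) * loss b z.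

(* d/dtheta L(h_theta; mu) = 0 at theta (L finite under integrability) *)
Definition grad_zero (loss : V -> sample -> R) (mu : probability sample R)
  (theta : V) : Prop :=
  let f := fun t : V => fine (Lloss loss t mu) in
  differentiable f theta /\ ('d f theta : V -> R) = (fun _ => 0).

End Poisoning.

From mathcomp Require Import all_boot all_order all_algebra all_classical all_reals all_analysis.
Import numFieldNormedType.Exports.
Import Order.TTheory GRing.Theory Num.Theory.
Local Open Scope classical_set_scope.
Local Open Scope ring_scope.
From HB Require Import structures.
From mathcomp Require Import measurable_realfun lebesgue_integral lra.
Set Implicit Arguments. Unset Strict Implicit. Unset Printing Implicit Defensive.

(* Let t0 be the (unique) minimizer of  L(.;muc) + delta_star L(.;mup_star)
   over Theta.  It suffices to build a poisoning distribution mu supported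
   in C such that t0 also minimizes  L(.;muc) + eps L(.;mu): by uniqueness
   of the minimizers both poisoned models are then t0, so their risks
   coincide.  The candidate is always a convex mixture
   a mup_star + (1 - a) nu, whose expected loss is the same mixture of
   expected losses:
   - under (1) take nu = muc; for suitable weights the new objective is a
     positive multiple of  L(.;muc) + delta_star L(.;mup_star);
   - under (2) take nu with a vanishing gradient at t0 and
     a = delta_star / eps; the new objective is the old one plus
     (eps - delta_star) L(.;nu), and t0 minimizes L(.;nu) because a convex
     function is minimal at any point where its differential vanishes. *)

Section ProbabilityMixture.
Context d (T : measurableType d) (R : realType).
Variables (P Q : probability T R) (a : R).
Hypothesis a01 : 0 <= a <= 1.

Let a_ge0 : 0 <= a. Proof. by case/andP: a01. Qed.
Let a_compl_ge0 : 0 <= 1 - a. Proof. by case/andP: a01 => _; rewrite subr_ge0. Qed.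

Definition pmix : set T -> \bar R :=
  measure_add (mscale (NngNum a_ge0) P) (mscale (NngNum a_compl_ge0) Q).

HB.instance Definition _ := Measure.on pmix.

Lemma pmixE A : pmix A = (a%:E * P A + (1 - a)%:E * Q A)%E.
Proof. by rewrite /pmix measure_addE. Qed.

Let pmix_setT : pmix setT = 1%E.
Proof. by rewrite pmixE !probability_setT !mule1 -EFinD addrC subrK. Qed.

HB.instance Definition _ := Measure_isProbability.Build _ _ _ pmix pmix_setT.

Lemma ge0_integral_pmix (f : T -> \bar R) : measurable_fun setT f ->
  (forall x, 0 <= f x)%E ->
  (\int[pmix]_x f x = a%:E * \int[P]_x f x + (1 - a)%:E * \int[Q]_x f x)%E.
Proof.
move=> mf f0; rewrite /pmix (ge0_integral_measure_add _ _ _ (fun x _ => f0 x) mf) //.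
by rewrite !ge0_integral_mscale.
Qed.

Lemma pmix_negligible (N : set T) :
  P.-negligible N -> Q.-negligible N -> pmix.-negligible N.
Proof.
move=> [A [mA PA0 NA]] [B [mB QB0 NB]].
have mAB : measurable (A `&` B) by exact: measurableI.
exists (A `&` B); split => //; last by move=> z Nz; split; [exact: NA|exact: NB].
rewrite pmixE (subset_measure0 mAB mA (@subIsetl _ A B) PA0).
by rewrite (subset_measure0 mAB mB (@subIsetr _ A B) QB0) !mule0 adde0.
Qed.

End ProbabilityMixture.

Definition convex_fun (R : realType) (V : normedModType R) (f : V -> R) : Prop :=
  forall a b (s : R), 0 <= s <= 1 ->
    f (s *: a + (1 - s) *: b) <= s * f a + (1 - s) * f b.

Section ConvexStationary.
Context (R : realType) (V : normedModType R) (f : V -> R).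
Hypothesis f_convex : convex_fun f.

Lemma convex_slope_le (t0 th : V) (s : R) : 0 < s <= 1 ->
  s^-1 * (f (s *: (th - t0) + t0) - f t0) <= f th - f t0.
Proof.
case/andP=> s_gt0 s_le1.
have -> : s *: (th - t0) + t0 = s *: th + (1 - s) *: t0.
  by rewrite scalerBl scale1r scalerBr -addrA [- _ + t0]addrC.
rewrite mulrC ler_pdivrMr //.
have s01 : 0 <= s <= 1 by rewrite (ltW s_gt0) s_le1.
have := f_convex th t0 s01; lra.
Qed.

(* A convex function is globally minimal where its differential vanishes:
   the directional derivative towards th is the right limit of the
   quotients above, hence 0 <= f th - f t0. *)
Lemma convex_stationary_min (t0 th : V) :
  differentiable f t0 -> ('d f t0 : V -> R) = (fun _ => 0) -> f t0 <= f th.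
Proof.
move=> df d0; rewrite -subr_ge0.
have D0 : 'D_(th - t0) f t0 = 0 by rewrite deriveE // d0.
have := @diff_derivable _ _ _ f t0 (th - t0) df.
rewrite /derivable => /cvg_dnbhs_at_right; rewrite -/(derive f t0 _) D0 => q0.
apply: (ler_cvg_to q0 (cvg_cst (f th - f t0))).
near=> s; apply: convex_slope_le; apply/andP; split.
- by near: s; exact: nbhs_right_gt.
- by apply/ltW; near: s; exact: nbhs_right_lt.
Unshelve. all: end_near.
Qed.

End ConvexStationary.

Section ExpectedLoss.
Context (R : realType) (d : measure_display) (X : measurableType d)
  (V : normedModType R) (loss : V -> sample X -> R).
Hypothesis loss_ge0 : forall theta z, 0 <= loss theta z.

Definition loss_integrable (mu : probability (sample X) R) : Prop :=
  forall theta, mu.-integrable setT (fun z => (loss theta z)%:E).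

(* Under integrability the expected loss is finite, so it is faithfully
   represented by its real part Lr. *)
Definition Lr (mu : probability (sample X) R) (theta : V) : R :=
  fine (Lloss loss theta mu).

Lemma LlossE (mu : probability (sample X) R) theta : loss_integrable mu ->
  Lloss loss theta mu = (Lr mu theta)%:E.
Proof. by move=> mu_int; rewrite /Lr fineK //; exact: integrable_fin_num. Qed.

Lemma Lr_pmix (P Q : probability (sample X) R) (a : R) (a01 : 0 <= a <= 1) theta :
  loss_integrable P -> loss_integrable Q ->
  Lr (pmix P Q a01) theta = a * Lr P theta + (1 - a) * Lr Q theta.
Proof.
move=> P_int Q_int.
have mloss : measurable_fun setT (fun z => (loss theta z)%:E).
  exact: measurable_int (P_int theta).
rewrite /Lr /Lloss ge0_integral_pmix //; last by move=> z; rewrite lee_fin.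
rewrite -/(Lloss loss theta P) -/(Lloss loss theta Q).
by rewrite (LlossE _ P_int) (LlossE _ Q_int) -!EFinM -EFinD.
Qed.

Lemma Lr_convex (mu : probability (sample X) R) :
  loss_convex loss -> loss_integrable mu -> convex_fun (Lr mu).
Proof.
move=> lcvx mu_int a b s s01.
rewrite -lee_fin EFinD !EFinM -!LlossE // /Lloss.
have mixed_int : mu.-integrable setT
    ((fun z => s%:E * (loss a z)%:E) \+ (fun z => (1 - s)%:E * (loss b z)%:E))%E.
  by apply: integrableD => //; apply: integrableZl.
rewrite -integralZl // -[X in (_ + X)%E]integralZl // -integralD //.
- apply: le_integral => // z _; rewrite /= -!EFinM -EFinD lee_fin; exact: lcvx.
- exact: integrableZl.
- exact: integrableZl.
Qed.

Variable muc : probability (sample X) R.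
Hypothesis muc_int : loss_integrable muc.

Definition Jr (mu : probability (sample X) R) (delta : R) (theta : V) : R :=
  Lr muc theta + delta * Lr mu theta.

Lemma is_argmin_pobj (Theta : set V) (mu : probability (sample X) R) delta t :
  loss_integrable mu ->
  is_argmin Theta (pobj loss muc mu delta) t <->
  Theta t /\ forall th, Theta th -> Jr mu delta t <= Jr mu delta th.
Proof.
move=> mu_int.
have pobjE th : pobj loss muc mu delta th = (Jr mu delta th)%:E.
  by rewrite /pobj !LlossE // -EFinM -EFinD.
by split=> -[Tt tmin]; split=> // th Tth; have := tmin th Tth; rewrite !pobjE lee_fin.
Qed.

Lemma Jr_pmix (P Q : probability (sample X) R) (a : R) (a01 : 0 <= a <= 1) eps theta :
  loss_integrable P -> loss_integrable Q ->
  Jr (pmix P Q a01) eps theta =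
  Lr muc theta + (eps * a) * Lr P theta + (eps * (1 - a)) * Lr Q theta.
Proof. by move=> P_int Q_int; rewrite /Jr Lr_pmix //; lra. Qed.

End ExpectedLoss.

(* A minimizer of f stays a minimizer of  c f + k  for c > 0 when it also
   minimizes k: the common form of both mixture constructions. *)
Lemma argmin_scale_shift (R : realType) (V : Type) (Theta : set V)
    (f g k : V -> R) (c : R) (t0 : V) :
  0 < c -> (forall th, Theta th -> f t0 <= f th) ->
  (forall th, Theta th -> k t0 <= k th) ->
  (forall th, g th = c * f th + k th) ->
  forall th, Theta th -> g t0 <= g th.
Proof.
move=> c_gt0 fmin kmin gE th Tth.
by rewrite !gE lerD ?kmin // ler_pM2l ?fmin.
Qed.

(* Weights for condition (1): the mixture a P + (1 - a) muc at budget eps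
   reproduces c times the objective at budget delta < eps. *)
Lemma clean_mixture_weights (R : realType) (delta eps : R) :
  0 <= delta < eps ->
  exists a c, [/\ 0 <= a <= 1, 0 < c, eps * a = c * delta & 1 + eps * (1 - a) = c].
Proof.
case/andP=> delta_ge0 delta_lt.
have eps_gt0 : 0 < eps by apply: le_lt_trans delta_lt.
have deltaS_gt0 : 0 < 1 + delta by lra.
set c := (1 + eps) / (1 + delta).
have cE : c * (1 + delta) = 1 + eps by rewrite /c mulrVK // unitfE gt_eqF.
have c_ge1 : 1 <= c by rewrite /c ler_pdivlMr // mul1r; lra.
have c_le : c <= 1 + eps by rewrite /c ler_pdivrMr //; nra.
have ex : eps * ((c - 1) / eps) = c - 1 by rewrite mulrC mulfVK ?gt_eqF.
exists (1 - (c - 1) / eps), c; split; [apply/andP; split | lra | lra | lra].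
- by rewrite subr_ge0 ler_pdivrMr // mul1r; lra.
- by rewrite lerBlDr lerDl divr_ge0 //; lra.
Qed.

Section MixtureConstructions.
Context (R : realType) (d : measure_display) (X : measurableType d)
  (V : normedModType R) (loss : V -> sample X -> R)
  (muc P : probability (sample X) R) (Theta : set V) (delta eps : R) (t0 : V).
Hypothesis loss_ge0 : forall theta z, 0 <= loss theta z.
Hypotheses (muc_int : loss_integrable loss muc) (P_int : loss_integrable loss P).
Hypothesis delta_range : 0 <= delta < eps.
Hypothesis t0_min : forall th, Theta th ->
  Jr loss muc P delta t0 <= Jr loss muc P delta th.

Lemma clean_mixture_argmin : exists a (a01 : 0 <= a <= 1), forall th, Theta th ->
  Jr loss muc (pmix P muc a01) eps t0 <= Jr loss muc (pmix P muc a01) eps th.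
Proof.
have [a [c [a01 c_gt0 eaE ecE]]] := clean_mixture_weights delta_range.
exists a, a01; apply: (argmin_scale_shift c_gt0 t0_min (k := fun _ => 0)) => // th.
rewrite Jr_pmix // /Jr eaE -ecE; lra.
Qed.

Lemma stationary_mixture_argmin (nu : probability (sample X) R) :
  loss_integrable loss nu -> (forall th, Lr loss nu t0 <= Lr loss nu th) ->
  exists a (a01 : 0 <= a <= 1), forall th, Theta th ->
  Jr loss muc (pmix P nu a01) eps t0 <= Jr loss muc (pmix P nu a01) eps th.
Proof.
move=> nu_int nu_min; case/andP: delta_range => delta_ge0 delta_lt.
have eps_gt0 : 0 < eps by apply: le_lt_trans delta_lt.
have a01 : 0 <= delta / eps <= 1.
  apply/andP; split; first by rewrite divr_ge0 // ltW.
  by rewrite ler_pdivrMr // mul1r ltW.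
have ea : eps * (delta / eps) = delta by rewrite mulrC mulfVK ?gt_eqF.
exists (delta / eps), a01.
apply: (argmin_scale_shift ltr01 t0_min
  (k := fun th => (eps - delta) * Lr loss nu th)) => [th _|th].
- by rewrite ler_pM2l ?subr_gt0.
- by rewrite Jr_pmix // ea mulrBr mulr1 ea /Jr; lra.
Qed.

End MixtureConstructions.

Theorem theorem2 (R : realType) (d : measure_display) (X : measurableType d)
  (V : normedModType R)
  (h : V -> X -> bool) (Theta : set V)
  (loss : V -> sample X -> R)
  (muc : probability (sample X) R) (C : set (sample X)) (eps : R)
  (mup_star : probability (sample X) R) (delta_star : R) :
  (* standing assumptions *)
  0 <= eps ->
  (forall theta z, 0 <= loss theta z) ->
  loss_convex loss ->
  (forall theta, muc.-integrable setT (fun z => (loss theta z)%:E)) ->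
  (forall (mu : probability (sample X) R) theta, supported_in mu C ->
     mu.-integrable setT (fun z => (loss theta z)%:E)) ->
  (* the relevant loss minimizers exist and are unique *)
  (forall (mu : probability (sample X) R) (delta : R),
     supported_in mu C -> 0 <= delta <= eps ->
     (exists theta, is_argmin Theta (pobj loss muc mu delta) theta) /\
     (forall t1 t2, is_argmin Theta (pobj loss muc mu delta) t1 ->
                    is_argmin Theta (pobj loss muc mu delta) t2 -> t1 = t2)) ->
  (* (mup_star, delta_star) is a distributional optimal poisoning pair *)
  supported_in mup_star C -> 0 <= delta_star <= eps ->
  (forall (mu : probability (sample X) R) (delta : R) t t_star,
     supported_in mu C -> 0 <= delta <= eps ->
     is_argmin Theta (pobj loss muc mu delta) t ->
     is_argmin Theta (pobj loss muc mup_star delta_star) t_star ->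
     (Risk h t muc <= Risk h t_star muc)%E) ->
  (* condition (1) or condition (2) *)
  (supported_in muc C \/
   (convex_param_set Theta /\
    forall theta, Theta theta ->
      exists mu : probability (sample X) R,
        supported_in mu C /\ grad_zero loss mu theta)) ->
  exists mup_eps : probability (sample X) R,
    supported_in mup_eps C /\
    forall t t_star,
      is_argmin Theta (pobj loss muc mup_eps eps) t ->
      is_argmin Theta (pobj loss muc mup_star delta_star) t_star ->
      Risk h t muc = Risk h t_star muc.
Proof.
move=> eps_ge0 loss_ge0 lcvx intc intC uniq supp_star delta_star_range _ cond.
have [[t0 t0_arg] _] := uniq mup_star delta_star supp_star delta_star_range.
suff [mu [supp_mu mu_arg]] : exists mu : probability (sample X) R,
    supported_in mu C /\ is_argmin Theta (pobj loss muc mu eps) t0.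
  exists mu; split => // t ts t_arg ts_arg.
  rewrite ((uniq _ _ supp_star delta_star_range).2 _ _ ts_arg t0_arg).
  by rewrite ((uniq _ _ supp_mu _).2 _ _ t_arg mu_arg) // eps_ge0 lexx.
have [<-|delta_neq] := eqVneq delta_star eps; first by exists mup_star.
have delta_range : 0 <= delta_star < eps.
  by case/andP: delta_star_range => -> ?; rewrite lt_neqAle delta_neq.
have star_int : loss_integrable loss mup_star := intC _ ^~ supp_star.
have [Tt0 t0_min] := (is_argmin_pobj intc _ _ _ star_int).1 t0_arg.
have [Q [[a [a01 mix_min]] supp_Q]] : exists Q : probability (sample X) R,
    (exists a (a01 : 0 <= a <= 1), forall th, Theta th ->
       Jr loss muc (pmix mup_star Q a01) eps t0 <=
       Jr loss muc (pmix mup_star Q a01) eps th) /\ supported_in Q C.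
  case: cond => [supp_muc | [_ stationary]].
    exists muc; split => //; exact: clean_mixture_argmin loss_ge0 intc star_int delta_range t0_min.
  have [nu [supp_nu [dnu dnu0]]] := stationary t0 Tt0.
  have nu_int := intC nu ^~ supp_nu.
  exists nu; split => //.
  apply: (stationary_mixture_argmin loss_ge0 star_int delta_range t0_min nu_int).
  by move=> th; apply: (convex_stationary_min (Lr_convex lcvx nu_int)).
have supp_mix : supported_in (pmix mup_star Q a01) C :=
  pmix_negligible a01 supp_star supp_Q.
exists (pmix mup_star Q a01); split => //.
by apply/(is_argmin_pobj intc Theta eps t0 (intC _ ^~ supp_mix)).
Qed.
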